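(* Let $(G,\precsim)$ be a compatible quasi-ordered abelian group and let $H$ be a subgroup of $G$ which is convex with respect to $\precsim$. Then either $H\subseteq G^o$ or $G^o\subseteq H$; and if $G^o\subseteq H$, then $H$ is an initial segment of $G$.
   Context: A compatible quasi-ordered abelian group is an abelian group $G$ with a total quasi-order $\precsim$ (reflexive, transitive, any two elements comparable) such that, writing $a\sim b$ for $a\precsim b\wedge b\precsim a$: $(Q_1)$ $x\sim0\Rightarrow x=0$; $(Q_2)$ $x\precsim y\wedge y\not\sim z\Rightarrow x+z\precsim y+z$, for all $x,y,z$. With $cl(g)$ the $\sim$-class of $g$, $g$ is o-type if $cl(g)=\{g\}$ and $g$ is not of order $2$; $G^o$ is the set of o-type elements. $S$ is convex if $s,t\in S$, $s\precsim a\precsim t$ imply $a\in S$; $S$ is an initial segment if $s\in S$, $a\precsim s$ imply $a\in S$. *)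

From mathcomp Require Import all_boot all_algebra.
Set Implicit Arguments. Unset Strict Implicit. Unset Printing Implicit Defensive.
Import GRing.Theory.
Local Open Scope ring_scope.

Section QO.
Variable G : zmodType.
Variable le : G -> G -> Prop.

Definition qo_equiv (a b : G) : Prop := le a b /\ le b a.

Definition compatible_qo : Prop :=
  [/\ (forall x, le x x),
      (forall x y z, le x y -> le y z -> le x z),
      (forall x y, le x y \/ le y x),
      (forall x, qo_equiv x 0 -> x = 0)
    & (forall x y z, le x y -> ~ qo_equiv y z -> le (x + z) (y + z))].

Definition order2 (g : G) : Prop := g <> 0 /\ g + g = 0.

Definition o_type (g : G) : Prop :=
  (forall h, qo_equiv h g <-> h = g) /\ ~ order2 g.

Definition is_subgroup (H : G -> Prop) : Prop :=
  H 0 /\ (forall x y, H x -> H y -> H (x - y)).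

Definition qo_convex (S : G -> Prop) : Prop :=
  forall s t a, S s -> S t -> le s a -> le a t -> S a.

Definition initial_segment (S : G -> Prop) : Prop :=
  forall s a, S s -> le a s -> S a.
End QO.

(* Every element h that is not o-type satisfies h ~ -h, and this forces h to
   lie above 0 and above every nonnegative o-type element k (otherwise adding
   -h and then h to 0 <~ k would give k + h ~ k, whence h = 0).  Negative
   elements are o-type.  Hence a convex subgroup containing a non-o-type h
   contains [0, h], so all nonnegative o-type elements, and by symmetry all
   o-type elements; and when it contains all o-type elements it contains all
   negative elements, so it is closed downwards. *)
From mathcomp Require Import all_boot all_algebra.
From Stdlib Require Import Classical.
Import GRing.Theory.
Local Open Scope ring_scope.
Set Implicit Arguments.

Section CompatibleQuasiOrder.
Variable G : zmodType.
Variable le : G -> G -> Prop.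
Hypothesis hc : compatible_qo le.

Let qo_refl x : le x x. Proof. by case: hc. Qed.
Let qo_trans x y z : le x y -> le y z -> le x z.
Proof. by case: hc => _ tr _ _ _; apply: tr. Qed.
Let qo_total x y : le x y \/ le y x. Proof. by case: hc. Qed.
Let qo_equiv0 x : qo_equiv le x 0 -> x = 0.
Proof. by case: hc => _ _ _ eq0 _; apply: eq0. Qed.
Let qo_addr x y z : le x y -> ~ qo_equiv le y z -> le (x + z) (y + z).
Proof. by case: hc => _ _ _ _ add; apply: add. Qed.

Lemma o_type0 : o_type le 0.
Proof.
split; last by case.
by move=> h; split=> [/qo_equiv0 | ->] //; split; apply: qo_refl.
Qed.

Lemma not_o_type_equivN h : ~ o_type le h -> qo_equiv le h (- h).
Proof.
move=> not_oh; apply: NNPP => not_hNh; apply: not_oh; split.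
  move=> b; split=> [[bh hb] | ->]; last by split; apply: qo_refl.
  apply: NNPP => neq_bh.
  have not_bNh : ~ qo_equiv le b (- h).
    by move=> [b1 b2]; apply: not_hNh; split; [apply: qo_trans hb b1 | apply: qo_trans b2 bh].
  have := qo_addr bh not_hNh; have := qo_addr hb not_bNh; rewrite subrr => e1 e2.
  by apply: neq_bh; apply/eqP; rewrite -subr_eq0; apply/eqP/qo_equiv0.
move=> [h_neq0 hh0]; apply: not_hNh.
have -> : - h = h by apply/eqP; rewrite eq_sym -addr_eq0 hh0.
by split; apply: qo_refl.
Qed.

Lemma o_typeN g : o_type le g -> o_type le (- g).
Proof.
move=> og; apply: NNPP => not_oNg.
have /(proj1 og) gNg : qo_equiv le (- g) g.
  by rewrite -[in X in qo_equiv le _ X](opprK g); apply: not_o_type_equivN.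
by apply: not_oNg; rewrite gNg.
Qed.

Lemma not_ge0_oppr_ge0 a : ~ le 0 a -> le 0 (- a).
Proof.
move=> a_not_ge0.
have not_0Na : ~ qo_equiv le 0 (- a).
  move=> [e1 e2]; apply: a_not_ge0.
  have /eqP : - a = 0 by apply: qo_equiv0.
  by rewrite oppr_eq0 => /eqP ->; apply: qo_refl.
have a_le0 : le a 0 by case: (qo_total 0 a).
by have := qo_addr a_le0 not_0Na; rewrite subrr add0r.
Qed.

Lemma not_o_type_ge0 h : ~ o_type le h -> le 0 h.
Proof.
move=> not_oh; apply: NNPP => h_not_ge0.
have [_ hNh] := not_o_type_equivN not_oh.
exact: h_not_ge0 (qo_trans (not_ge0_oppr_ge0 h_not_ge0) hNh).
Qed.

Lemma o_type_ge0_le_not_o_type h k :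
  ~ o_type le h -> o_type le k -> le 0 k -> le k h.
Proof.
move=> not_oh ok k_ge0; apply: NNPP => not_kh.
have [hNh Nhh] := not_o_type_equivN not_oh.
have h_ge0 := not_o_type_ge0 not_oh.
have hk : le h k by case: (qo_total k h).
have Nh_ge0 : le 0 (- h) := qo_trans h_ge0 hNh.
have k_le_Nhk : le k (- h + k).
  have not_Nhk : ~ qo_equiv le (- h) k by move=> [_ e]; apply: not_kh; apply: qo_trans e Nhh.
  by have := qo_addr Nh_ge0 not_Nhk; rewrite add0r.
have kh_le_k : le (k + h) k.
  have not_Nhk_h : ~ qo_equiv le (- h + k) h.
    by move=> [e _]; apply: not_kh; apply: qo_trans k_le_Nhk e.
  by have := qo_addr k_le_Nhk not_Nhk_h; rewrite addrAC addNr add0r.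
have k_le_kh : le k (k + h).
  have not_hk : ~ qo_equiv le h k by move=> [_ e]; apply: not_kh.
  by have := qo_addr h_ge0 not_hk; rewrite add0r addrC.
have /eqP : k + h = k by apply/(proj1 ok); split.
rewrite -subr_eq0 addrAC subrr add0r => /eqP h0.
by apply: not_oh; rewrite h0; apply: o_type0.
Qed.

Variable H : G -> Prop.
Hypotheses (subH : is_subgroup H) (convH : qo_convex le H).

Lemma subgroupN g : H g -> H (- g).
Proof. by case: subH => H0 HB Hg; rewrite -sub0r; apply: HB. Qed.

Lemma convex_subgroup_ge0 s a : H s -> le 0 a -> le a s -> H a.
Proof. by case: subH => H0 _; apply: convH. Qed.

Lemma o_type_sub_convex h : H h -> ~ o_type le h -> forall g, o_type le g -> H g.
Proof.
move=> Hh not_oh g og; have [g_ge0 | g_not_ge0] := classic (le 0 g).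
  exact: convex_subgroup_ge0 Hh g_ge0 (o_type_ge0_le_not_o_type not_oh og g_ge0).
have Ng_ge0 := not_ge0_oppr_ge0 g_not_ge0.
rewrite -(opprK g); apply: subgroupN.
exact: convex_subgroup_ge0 Hh Ng_ge0 (o_type_ge0_le_not_o_type not_oh (o_typeN og) Ng_ge0).
Qed.

Lemma initial_segment_o_type_sub :
  (forall g, o_type le g -> H g) -> initial_segment le H.
Proof.
move=> o_typeH s a Hs a_le_s; have [a_ge0 | a_not_ge0] := classic (le 0 a).
  exact: convex_subgroup_ge0 Hs a_ge0 a_le_s.
apply: o_typeH; apply: NNPP => not_oa.
exact: a_not_ge0 (not_o_type_ge0 not_oa).
Qed.

End CompatibleQuasiOrder.

Theorem mainTheorem8 (G : zmodType) (le : G -> G -> Prop) (H : G -> Prop) :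
  compatible_qo le -> is_subgroup H -> qo_convex le H ->
  ((forall g, H g -> o_type le g) \/ (forall g, o_type le g -> H g)) /\
  ((forall g, o_type le g -> H g) -> initial_segment le H).
Proof.
move=> hc subH convH; split; last exact: initial_segment_o_type_sub.
have [[h Hh not_oh] | no_h] := classic (exists2 h, H h & ~ o_type le h).
  by right; apply: o_type_sub_convex Hh not_oh.
by left=> g Hg; apply: NNPP => not_og; apply: no_h; exists g.
Qed.
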